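(* Let $\alpha > -1$ and $k \geq 1$, and let $M_k^{\alpha} \in \mathbb{R}^{k\times k}$ be the Hankel matrix with entries $(M_k^{\alpha})_{ij} = \Gamma(i+j+\alpha-1)$, $1 \leq i,j \leq k$ (i.e. the moment matrix of $\gamma_m = \int_0^\infty x^{m+\alpha}e^{-x}dx = \Gamma(m+\alpha+1)$). Then its Cholesky decomposition is $M_k^{\alpha} = (R_k^{\alpha})^T R_k^{\alpha}$, where $R_k^{\alpha}$ is the upper triangular matrix with entries $$R^{\alpha}_{ij} = \frac{(j-1)!}{(j-i)!}\,\frac{\Gamma(\alpha+j)}{\sqrt{\Gamma(i)\,\Gamma(\alpha+i)}}, \qquad 1 \leq i \leq j \leq k,$$ and $R^{\alpha}_{ij}=0$ for $i>j$.
   Context: $\Gamma$ denotes the Gamma function. *)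

From HB Require Import structures.
From mathcomp Require Import all_boot all_order all_algebra.
From mathcomp Require Import all_classical all_reals all_analysis.
Set Implicit Arguments. Unset Strict Implicit. Unset Printing Implicit Defensive.
Import Order.TTheory GRing.Theory Num.Theory.
Import numFieldNormedType.Exports.
Local Open Scope classical_set_scope.
Local Open Scope ring_scope.

(* Euler Gamma function, Gamma(s) = \int_0^oo x^(s-1) e^(-x) dx
   (Lebesgue integral over ]0,+oo[); meaningful for s > 0, which is the
   only range used below. *)
Definition Gamma (R : realType) (s : R) : R :=
  Rintegral (@lebesgue_measure R) `]0, +oo[%classic
    (fun x => powR x (s - 1) * expR (- x)).

(* Hankel moment matrix, 0-based indices: entry (i,j) is
   Gamma((i+1)+(j+1)+alpha-1) = Gamma(i+j+alpha+1). *)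
Definition Mmat (R : realType) (alpha : R) (k : nat) : 'M[R]_k :=
  \matrix_(i < k, j < k) Gamma ((i + j)%:R + alpha + 1).

(* Upper-triangular Cholesky factor, 0-based indices (paper's i = i0+1,
   j = j0+1): for i <= j,
   (j0)!/(j0-i0)! * Gamma(alpha+j0+1) / sqrt(Gamma(i0+1) Gamma(alpha+i0+1)),
   and 0 for i > j. *)
Definition Rmat (R : realType) (alpha : R) (k : nat) : 'M[R]_k :=
  \matrix_(i < k, j < k)
    if (i <= j)%N then
      ((j`!)%:R / ((j - i)`!)%:R) *
      (Gamma (alpha + j%:R + 1) /
         Num.sqrt (Gamma (i%:R + 1) * Gamma (alpha + i%:R + 1)))
    else 0.

(* Expanding (R^T R)_ij = sum_l R_li R_lj and writing
   Gamma(alpha + i + 1) = (alpha + l + 1)^(i - l) Gamma(alpha + l + 1) with the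
   rising factorial x^(n) = x (x + 1) ... (x + n - 1), the Cholesky identity
   reduces to the binomial-type identity
     sum_l C(i, l) j(j - 1)...(j - l + 1) (a + l)^(i - l) = (a + j)^(i),
   proved by induction on i from a + j = (a + l) + (j - l) and Pascal's rule.
   Only the functional equation of Gamma on ]0, +oo[ is used: Gamma(s + 1) =
   s Gamma(s) follows by integrating by parts on [1/n, n] and letting n tend
   to infinity by monotone convergence, and Gamma(s) is finite because
   s Gamma(s) = Gamma(s + 1) <= Gamma(n + 1) + Gamma(n + 2) = n! + (n + 1)!
   for n <= s <= n + 1. *)

From HB Require Import structures.
From mathcomp Require Import all_boot all_order all_algebra.
From mathcomp Require Import all_classical all_reals all_analysis.
From mathcomp Require Import ring lra zify measurable_realfun.
Import Order.TTheory GRing.Theory Num.Theory.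
Import numFieldNormedType.Exports.

Set Implicit Arguments.
Unset Strict Implicit.
Unset Printing Implicit Defensive.
Local Open Scope ring_scope.

Section GammaIntegral.
Context {R : realType}.
Local Notation mu := (@lebesgue_measure R).
Local Open Scope classical_set_scope.
Local Open Scope ring_scope.

Definition gamma_integrand (t x : R) : R := powR x t * expR (- x).

Definition gamma_integral (t : R) : \bar R :=
  (\int[mu]_(x in `]0%R, +oo[) (gamma_integrand t x)%:E)%E.

Lemma gamma_integrand_ge0 t x : 0 <= gamma_integrand t x.
Proof. by rewrite mulr_ge0 ?powR_ge0 ?expR_ge0. Qed.

Lemma measurable_gamma_integrand t D : measurable_fun D (gamma_integrand t).
Proof.
apply: measurable_funTS; apply: measurable_funM; first exact: measurable_powR.
by apply: measurableT_comp; [exact: measurable_expR|exact: measurable_funN].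
Qed.

Lemma continuous_expRN x : {for x, continuous (fun y : R => expR (- y))}.
Proof. by apply: continuous_comp; [exact: continuousN|exact: continuous_expR]. Qed.

Lemma continuous_powR (s x : R) : 0 < x -> {for x, continuous (fun y => powR y s)}.
Proof.
move=> x0; apply/differentiable_continuous/derivable1_diffP.
by apply: derivable_powR; rewrite in_itv/= andbT.
Qed.

Lemma continuous_gamma_integrand t x : 0 < x ->
  {for x, continuous (gamma_integrand t)}.
Proof.
by move=> x0; apply: continuousM; [exact: continuous_powR|exact: continuous_expRN].
Qed.

Lemma pos_continuous_within_itv (f : R -> R) a b : 0 < a ->
  (forall x, 0 < x -> {for x, continuous f}) -> {within `[a, b], continuous f}.
Proof.
move=> a0 cf; apply: continuous_in_subspaceT => x.
by rewrite inE/= in_itv/= => /andP[ax _]; apply: cf; exact: lt_le_trans ax.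
Qed.

Lemma pos_derivable_oo_LRcontinuous (f : R -> R) a b : 0 < a -> a < b ->
  (forall x, 0 < x -> {for x, continuous f}) ->
  (forall x, 0 < x -> derivable f x 1) -> derivable_oo_LRcontinuous f a b.
Proof.
move=> a0 ab cf df; split.
- by move=> x; rewrite in_itv/= => /andP[ax _]; apply: df; exact: lt_trans ax.
- by apply: cvg_at_right_filter; exact: cf.
- by apply: cvg_at_left_filter; apply: cf; exact: lt_trans ab.
Qed.

Lemma integrable_gamma_integrand t a b : 0 < a ->
  mu.-integrable `[a, b] (EFin \o gamma_integrand t).
Proof.
move=> a0; apply: continuous_compact_integrable; first exact: segment_compact.
by apply: pos_continuous_within_itv => // x; exact: continuous_gamma_integrand.
Qed.

Lemma Rintegral_gamma_integrand_by_parts s a b : 0 < s -> 0 < a -> a < b ->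
  \int[mu]_(x in `[a, b]) gamma_integrand s x =
  gamma_integrand s a - gamma_integrand s b +
  s * \int[mu]_(x in `[a, b]) gamma_integrand (s - 1) x.
Proof.
move=> s0 a0 ab; rewrite /gamma_integrand.
rewrite (@Rintegration_by_parts R (fun y => powR y s) (fun y => - expR (- y))
  (fun y => s * powR y (s - 1)) (fun y => expR (- y)) a b ab).
- have -> : \int[mu]_(x in `[a, b]) (s * powR x (s - 1) * - expR (- x)) =
      \int[mu]_(x in `[a, b]) (- s * gamma_integrand (s - 1) x).
    by apply: eq_Rintegral => x _; rewrite mulrN mulNr mulrA.
  rewrite RintegralZl //; last exact: integrable_gamma_integrand.
  by rewrite /gamma_integrand !mulrN mulNr opprK; lra.
- apply: pos_continuous_within_itv => // x x0.
  by apply: continuousM; [exact: cvg_cst|exact: continuous_powR].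
- apply: pos_derivable_oo_LRcontinuous => // x x0; first exact: continuous_powR.
  by apply: derivable_powR; rewrite in_itv/= andbT.
- move=> x; rewrite in_itv/= => /andP[ax _].
  by rewrite powR_derive1// in_itv/= andbT (lt_trans a0 ax).
- by apply: pos_continuous_within_itv => // x _; exact: continuous_expRN.
- apply: pos_derivable_oo_LRcontinuous => // x _.
  by apply: continuousN; exact: continuous_expRN.
- by move=> x _; rewrite derive1E derive_val mulrN1 opprK.
Qed.

Definition gamma_segment (n : nat) : set R := `[n.+2%:R^-1, n.+2%:R].

Lemma gamma_segment_nondecreasing : nondecreasing_seq gamma_segment.
Proof.
move=> n m nm; rewrite subsetEset => x.
rewrite /gamma_segment /= !in_itv/= => /andP[xl xr].
apply/andP; split; last by rewrite (le_trans xr) // ler_nat; lia.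
by apply: le_trans xl; rewrite lef_pV2 ?posrE ?ltr0n // ler_nat; lia.
Qed.

Lemma bigcup_gamma_segment : \bigcup_n gamma_segment n = `]0, +oo[%classic.
Proof.
apply/seteqP; split => x.
  move=> [n _]; rewrite /gamma_segment /= !in_itv/= andbT => /andP[xl _].
  by apply: lt_le_trans xl; rewrite invr_gt0 ltr0n.
rewrite /= in_itv/= andbT => x0.
have xV0 : 0 < x^-1 by rewrite invr_gt0.
exists (Num.truncn (x + x^-1)) => //.
have lt_trunc : x + x^-1 < (Num.truncn (x + x^-1)).+2%:R.
  by apply: (lt_le_trans (truncnS_gt _)); rewrite ler_nat.
rewrite /gamma_segment /= in_itv/=; apply/andP; split.
  rewrite -[leRHS]invrK lef_pV2 ?posrE ?invr_gt0 ?ltr0n //.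
  by apply: ltW; apply: le_lt_trans lt_trunc; rewrite lerDr ltW.
by apply: ltW; apply: le_lt_trans lt_trunc; rewrite lerDl ltW.
Qed.

Lemma gamma_segment_integral_cvg t :
  (\int[mu]_(x in gamma_segment n) (gamma_integrand t x)%:E)%E @[n --> \oo] -->
  gamma_integral t.
Proof.
rewrite /gamma_integral -bigcup_gamma_segment.
apply: ge0_nondecreasing_set_cvg_integral.
- exact: gamma_segment_nondecreasing.
- by move=> n; exact: measurable_itv.
- by move=> n; apply/measurable_EFinP; exact: measurable_gamma_integrand.
- by move=> n x _; rewrite lee_fin gamma_integrand_ge0.
Qed.

Lemma gamma_segment_integralE t n :
  (\int[mu]_(x in gamma_segment n) (gamma_integrand t x)%:E)%E =
  (\int[mu]_(x in gamma_segment n) gamma_integrand t x)%:E.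
Proof.
rewrite fineK //; apply: integrable_fin_num; first exact: measurable_itv.
by apply: integrable_gamma_integrand; rewrite invr_gt0 ltr0n.
Qed.

Lemma invr_natSS_cvg0 : (n.+2%:R^-1 : R) @[n --> \oo] --> 0.
Proof.
have := @cvg_harmonic R; rewrite -cvg_shiftS.
by apply: cvg_trans; apply: near_eq_cvg; near=> n.
Unshelve. all: by end_near. Qed.

Lemma gamma_integrand_cvg0 s : 0 < s ->
  gamma_integrand s n.+2%:R^-1 @[n --> \oo] --> 0.
Proof.
move=> s0; have : gamma_integrand s a @[a --> 0^'+] --> 0.
  rewrite -[X in _ --> X](mul0r (expR (- 0))).
  apply: cvgM; first exact: powR_cvg0.
  by apply: cvg_at_right_filter; exact: continuous_expRN.
move/cvg_at_rightP; apply; split; last exact: invr_natSS_cvg0.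
by move=> n; rewrite invr_gt0 ltr0n.
Qed.

Lemma gamma_integrand_le_fact s b m : 1 <= b -> s <= m%:R ->
  gamma_integrand s b <= m.+1`!%:R / b.
Proof.
move=> b1 sm; have b0 : 0 < b by apply: lt_le_trans b1.
have fact0 : 0 < m.+1`!%:R :> R by rewrite ltr0n fact_gt0.
have e0 := expR_gt0 b.
have powR_le : powR b s <= b ^+ m.
  by rewrite -powR_mulrn ?(ltW b0) //; apply: ler_powR.
have expR_ge : b ^+ m.+1 / m.+1`!%:R <= expR b.
  by apply: le_trans (expR_ge1Dxn m (ltW b0)); rewrite lerDr.
rewrite /gamma_integrand expRN.
apply: (le_trans (ler_wpM2r _ powR_le)); first by rewrite invr_ge0 ltW.
rewrite ler_pdivlMr // mulrC mulrA ler_pdivrMr //.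
by rewrite -exprS mulrC -ler_pdivrMr.
Qed.

Lemma gamma_integrand_cvgy s : gamma_integrand s n.+2%:R @[n --> \oo] --> 0.
Proof.
pose m := Num.truncn `|s|.
have sm : s <= m.+1%:R by apply: le_trans (ler_norm s) _; exact/ltW/truncnS_gt.
apply: (@squeeze_cvgr _ _ _ _ (fun=> 0) (fun n => m.+2`!%:R * n.+2%:R^-1)).
- near=> n; rewrite gamma_integrand_ge0 /=.
  by apply: gamma_integrand_le_fact => //; rewrite (ler_nat _ 1).
- exact: cvg_cst.
- rewrite -[X in _ --> X](mulr0 m.+2`!%:R).
  by apply: cvgM; [exact: cvg_cst|exact: invr_natSS_cvg0].
Unshelve. all: by end_near. Qed.

Lemma gamma_integralS s : 0 < s ->
  gamma_integral s = (s%:E * gamma_integral (s - 1))%E.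
Proof.
move=> s0.
pose boundary n := gamma_integrand s n.+2%:R^-1 - gamma_integrand s n.+2%:R.
have segment_by_parts n :
    (\int[mu]_(x in gamma_segment n) (gamma_integrand s x)%:E)%E =
    ((boundary n)%:E +
     s%:E * \int[mu]_(x in gamma_segment n) (gamma_integrand (s - 1) x)%:E)%E.
  rewrite !gamma_segment_integralE -EFinM -EFinD; congr EFin.
  apply: Rintegral_gamma_integrand_by_parts; rewrite ?invr_gt0 ?ltr0n //.
  by rewrite (@lt_trans _ _ 1) // ?invf_lt1 ?ltr0n ?ltr1n.
have boundary_cvg : (boundary n)%:E @[n --> \oo] --> (0 : \bar R).
  apply: cvg_EFin; first exact: nearW.
  rewrite -[X in _ --> X](subr0 0).
  by apply: cvgB; [exact: gamma_integrand_cvg0|exact: gamma_integrand_cvgy].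
have lim_s := @gamma_segment_integral_cvg s.
have lim_s1 := @gamma_segment_integral_cvg (s - 1).
have lim_by_parts : ((boundary n)%:E + s%:E *
    \int[mu]_(x in gamma_segment n) (gamma_integrand (s - 1) x)%:E)%E
    @[n --> \oo] --> (0 + s%:E * gamma_integral (s - 1))%E.
  by apply: cvgeD => //; apply: cvgeZl.
rewrite (funext segment_by_parts) in lim_s; rewrite add0e in lim_by_parts.
exact: (cvg_unique _ lim_s lim_by_parts).
Qed.

Lemma gamma_integral0 : gamma_integral 0 = 1%E.
Proof.
rewrite /gamma_integral /gamma_integrand.
under eq_integral do rewrite powRr0 mul1r.
rewrite integral_itv_obnd_cbnd; last first.
  apply/measurable_EFinP/measurable_funTS.
  by apply: measurableT_comp; [exact: measurable_expR|exact: measurable_funN].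
rewrite (@ge0_continuous_FTC2y R (fun x => expR (- x)) (fun x => - expR (- x)) 0 0).
- by rewrite oppr0 expR0 -EFinB sub0r opprK.
- by move=> x _; exact: expR_ge0.
- by apply: continuous_subspaceT => x; exact: continuous_expRN.
- by rewrite -oppr0; apply: cvgN; exact: cvgr_expR.
- by move=> x _.
- by apply: cvg_at_right_filter; have := continuousN (continuous_expRN (x := 0)); exact.
- by move=> x _; rewrite derive1E derive_val mulrN1 opprK.
Qed.

Lemma gamma_integral_ge0 t : (0 <= gamma_integral t)%E.
Proof. by apply: integral_ge0 => x _; rewrite lee_fin gamma_integrand_ge0. Qed.

Lemma gamma_integral_nat n : gamma_integral n%:R = n`!%:R%:E.
Proof.
elim: n => [|n IH]; first exact: gamma_integral0.
rewrite gamma_integralS ?ltr0n // -natr1 addrK IH -EFinM.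
by rewrite factS natrM natr1.
Qed.

Lemma powR_le_add_nat (x s : R) n : 0 < x -> n%:R <= s -> s <= n.+1%:R ->
  powR x s <= powR x n%:R + powR x n.+1%:R.
Proof.
move=> x0 ns sn; have [x1|x1] := leP x 1.
  by rewrite -[powR x s]addr0 lerD ?powR_ge0 // ger_powR // x0.
by rewrite -[powR x s]add0r lerD ?powR_ge0 // ler_powR // ltW.
Qed.

Lemma gamma_integral_fin_num t : -1 < t -> gamma_integral t \is a fin_num.
Proof.
move=> t1; have t1_gt0 : 0 < t + 1 by lra.
pose n := Num.truncn (t + 1).
have /andP[nt tn] := truncn_itv (ltW t1_gt0).
have le_nat : (gamma_integral (t + 1) <=
    gamma_integral n%:R + gamma_integral n.+1%:R)%E.
  rewrite /gamma_integral -ge0_integralD //; last 4 first.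
  - by move=> x _; rewrite lee_fin gamma_integrand_ge0.
  - by apply/measurable_EFinP; exact: measurable_gamma_integrand.
  - by move=> x _; rewrite lee_fin gamma_integrand_ge0.
  - by apply/measurable_EFinP; exact: measurable_gamma_integrand.
  apply: ge0_le_integral => //.
  - by move=> x _; rewrite lee_fin gamma_integrand_ge0.
  - by apply/measurable_EFinP; exact: measurable_gamma_integrand.
  - by apply: emeasurable_funD; apply/measurable_EFinP;
      exact: measurable_gamma_integrand.
  move=> x; rewrite /= in_itv/= andbT => x0.
  rewrite -EFinD lee_fin /gamma_integrand -mulrDl ler_wpM2r ?expR_ge0 //.
  by rewrite powR_le_add_nat // ltW.
have fin_t1 : gamma_integral (t + 1) \is a fin_num.
  rewrite ge0_fin_numE ?gamma_integral_ge0 //; apply: le_lt_trans le_nat _.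
  by rewrite !gamma_integral_nat -EFinD ltry.
rewrite ge0_fin_numE ?gamma_integral_ge0 // ltNge leye_eq.
apply/negP => /eqP t_infty; move: fin_t1.
by rewrite gamma_integralS // addrK t_infty gt0_muley ?lte_fin.
Qed.

Lemma gamma_integral_gt0 t : -1 < t -> (0 < gamma_integral t)%E.
Proof.
(* On [1, 2], x^t >= x^-1 >= 1/2 and e^-x >= e^-2. *)
move=> t1; pose c : R := expR (- 2) / 2.
have c0 : 0 < c by rewrite divr_gt0 ?expR_gt0.
apply: (@lt_le_trans _ _ (\int[mu]_(x in `[1%R, 2%R]) c%:E)%E).
  rewrite integral_cst /=; last exact: measurable_itv.
  rewrite lebesgue_measure_itv /= lte_fin ltr1n -EFinB -EFinM lte_fin.
  by rewrite mulr_gt0 // subr_gt0 ltr1n.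
apply: (@le_trans _ _ (\int[mu]_(x in `[1%R, 2%R]) (gamma_integrand t x)%:E)%E).
  apply: ge0_le_integral => //.
  - by move=> x _; rewrite lee_fin ltW.
  - by apply/measurable_EFinP; exact: measurable_gamma_integrand.
  move=> x; rewrite /= in_itv/= => /andP[x1 x2].
  have x0 : 0 < x by apply: lt_le_trans x1.
  rewrite lee_fin /gamma_integrand /c mulrC ler_pM ?invr_ge0 ?expR_ge0 //.
    apply: (@le_trans _ _ (powR x (-1))).
      by rewrite powR_inv1 ?(ltW x0) // lef_pV2 ?posrE.
    by rewrite ler_powR // ltW.
  by rewrite ler_expR lerN2.
apply: ge0_subset_integral => //.
- by apply/measurable_EFinP; exact: measurable_gamma_integrand.
- by move=> x _; rewrite lee_fin gamma_integrand_ge0.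
- by move=> x; rewrite /= !in_itv/= andbT => /andP[x1 _]; exact: lt_le_trans x1.
Qed.

Lemma GammaE (s : R) : Gamma s = fine (gamma_integral (s - 1)).
Proof. by []. Qed.

Lemma Gamma_gt0 (s : R) : 0 < s -> 0 < Gamma s.
Proof.
move=> s0; have s1 : -1 < s - 1 by lra.
have := gamma_integral_gt0 s1; have := gamma_integral_fin_num s1.
by rewrite GammaE; case: (gamma_integral (s - 1)).
Qed.

Lemma GammaS (s : R) : 0 < s -> Gamma (s + 1) = s * Gamma s.
Proof.
move=> s0; have s1 : -1 < s - 1 by lra.
rewrite !GammaE addrK gamma_integralS //.
by move: (gamma_integral_fin_num s1); case: (gamma_integral (s - 1)).
Qed.

Lemma Gamma1 : Gamma 1 = 1 :> R.
Proof. by rewrite GammaE subrr gamma_integral0. Qed.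
End GammaIntegral.

Section RisingFactorial.
Variable R : comRingType.

Definition rising_fact (b : R) (n : nat) : R := \prod_(t < n) (b + t%:R).

Lemma rising_fact0 b : rising_fact b 0 = 1.
Proof. by rewrite /rising_fact big_ord0. Qed.

Lemma rising_factS b n : rising_fact b n.+1 = b * rising_fact (b + 1) n.
Proof.
rewrite /rising_fact big_ord_recl addr0; congr (_ * _).
by apply: eq_bigr => t _; rewrite /bump /= -natr1 addrA addrAC.
Qed.

Lemma rising_factSr b n : rising_fact b n.+1 = rising_fact b n * (b + n%:R).
Proof. by rewrite /rising_fact big_ord_recr. Qed.

Lemma natr_ffactSr (j m : nat) : (j ^_ m.+1)%:R = (j ^_ m)%:R * (j%:R - m%:R) :> R.
Proof.
rewrite ffactnSr natrM; have [mj|jm] := leqP m j; first by rewrite natrB.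
by rewrite ffact_small // !mul0r.
Qed.

Lemma rising_fact_binomial (a : R) (i j : nat) :
  \sum_(l < i.+1) 'C(i, l)%:R * (j ^_ l)%:R * rising_fact (a + l%:R) (i - l) =
  rising_fact (a + j%:R) i.
Proof.
elim: i a => [|i IH] a.
  by rewrite big_ord1 bin0 ffactn0 addr0 !rising_fact0 !mul1r.
have shift (l : nat) : a + l.+1%:R = a + 1 + l%:R by rewrite -natr1 addrA addrAC.
(* Multiply the induction hypothesis at a + 1 by a + j = (a + l) + (j - l). *)
have split_IH : rising_fact (a + j%:R) i.+1 =
    \sum_(l < i.+1) 'C(i, l)%:R * (j ^_ l)%:R * rising_fact (a + l%:R) (i.+1 - l) +
    \sum_(l < i.+1) 'C(i, l)%:R * (j ^_ l.+1)%:R * rising_fact (a + l.+1%:R) (i - l).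
  rewrite rising_factS addrAC -IH big_distrr -big_split /=.
  apply: eq_bigr => l _; rewrite shift natr_ffactSr subSn; last by rewrite -ltnS.
  by rewrite rising_factS addrAC; ring.
rewrite split_IH big_ord_recl /= addrC.
under eq_bigr do rewrite /bump /= add1n binS natrD !mulrDl subSS.
rewrite big_split /= addrAC; congr (_ + _).
rewrite [in LHS]big_ord_recr /= bin_small // !mul0r addr0.
by rewrite [in RHS]big_ord_recl /= !bin0 addrC.
Qed.

End RisingFactorial.

Section CholeskyFactor.
Variables (R : rcfType) (G : R -> R).
Hypothesis G_gt0 : forall x, 0 < x -> 0 < G x.
Hypothesis GS : forall x, 0 < x -> G (x + 1) = x * G x.
Hypothesis G1 : G 1 = 1.

Lemma G_add_nat b n : 0 < b -> G (b + n%:R) = rising_fact b n * G b.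
Proof.
move=> b0; elim: n => [|n IH]; first by rewrite addr0 rising_fact0 mul1r.
rewrite -natr1 addrA GS ?IH ?rising_factSr; first ring.
by rewrite ltr_wpDr ?ler0n.
Qed.

Lemma G_nat1 n : G (n%:R + 1) = n`!%:R.
Proof.
elim: n => [|n IH]; first by rewrite add0r G1.
by rewrite -natr1 GS ?IH ?factS ?natrM ?natr1 ?ltr_wpDl ?ler0n // mulrC.
Qed.

Variable alpha : R.
Hypothesis alpha_gtN1 : -1 < alpha.

Let alpha_nat_gt0 n : 0 < alpha + n%:R + 1.
Proof. by rewrite addrAC ltr_wpDr // -[1]opprK subr_gt0. Qed.

Definition cholesky_entry (i j : nat) : R :=
  if (i <= j)%N then
    (j`!%:R / (j - i)`!%:R) *
    (G (alpha + j%:R + 1) / Num.sqrt (G (i%:R + 1) * G (alpha + i%:R + 1)))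
  else 0.

Lemma cholesky_entry_mul l i j :
  cholesky_entry l i * cholesky_entry l j =
  'C(i, l)%:R * (j ^_ l)%:R * rising_fact (alpha + 1 + l%:R) (i - l) *
  G (alpha + j%:R + 1).
Proof.
rewrite /cholesky_entry.
have [li|il] := leqP l i; last by rewrite bin_small // !mul0r.
have [lj|jl] := leqP l j; last by rewrite ffact_small // !(mulr0, mul0r).
set P := G (l%:R + 1) * G (alpha + l%:R + 1).
have P_gt0 : 0 < P by rewrite mulr_gt0 ?G_gt0 // natr1 ltr0Sn.
have div_sqrtP x y : x / Num.sqrt P * (y / Num.sqrt P) = x * y / P.
  by rewrite mulrACA -invfM -expr2 sqr_sqrtr ?ltW.
rewrite [X in X * _]mulrA [X in _ * X]mulrA div_sqrtP /P G_nat1.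
have -> : alpha + i%:R + 1 = (alpha + 1 + l%:R) + (i - l)%:R.
  by rewrite natrB //; ring.
rewrite G_add_nat; last by rewrite addrAC.
rewrite -(bin_fact li) -(ffact_fact lj) !natrM addrAC.
field.
by rewrite !pnatr_eq0 -!lt0n !fact_gt0 gt_eqF ?G_gt0.
Qed.

Lemma sum_cholesky_entry_mul N i j : (i < N)%N ->
  \sum_(l < N) cholesky_entry l i * cholesky_entry l j = G ((i + j)%:R + alpha + 1).
Proof.
move=> iN.
pose f l := 'C(i, l)%:R * (j ^_ l)%:R * rising_fact (alpha + 1 + l%:R) (i - l).
have sum_f_widen : \sum_(l < N) f l = \sum_(l < i.+1) f l.
  rewrite (big_ord_widen N f iN) [RHS]big_mkcond; apply: eq_bigr => l _.
  by case: ltnP => // il; rewrite /f bin_small // !mul0r.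
transitivity (\sum_(l < N) f l * G (alpha + j%:R + 1)).
  by apply: eq_bigr => l _; rewrite cholesky_entry_mul.
rewrite -big_distrl /= sum_f_widen rising_fact_binomial addrAC -G_add_nat.
  by rewrite natrD; congr G; ring.
exact: alpha_nat_gt0.
Qed.

Lemma cholesky_entry_diag_gt0 i : 0 < cholesky_entry i i.
Proof.
rewrite /cholesky_entry leqnn subnn fact0 divr1.
by rewrite !mulr_gt0 ?invr_gt0 ?sqrtr_gt0 ?mulr_gt0 ?G_gt0 ?ltr0n ?fact_gt0 //
  natr1 ltr0Sn.
Qed.

End CholeskyFactor.

Unset Implicit Arguments.

Theorem proposition5 (R : realType) (alpha : R) (k : nat)
    (halpha : -1 < alpha) (hk : (1 <= k)%N) :
  Mmat alpha k = (Rmat alpha k)^T *m Rmat alpha k /\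
  (forall i j : 'I_k, (j < i)%N -> Rmat alpha k i j = 0) /\
  (forall i : 'I_k, 0 < Rmat alpha k i i).
Proof.
have Rmat_entry i j : Rmat alpha k i j = cholesky_entry (@Gamma R) alpha i j.
  by rewrite mxE.
split; [|split].
- apply/matrixP => i j; rewrite !mxE.
  under eq_bigr do rewrite mxE !Rmat_entry.
  by rewrite (sum_cholesky_entry_mul Gamma_gt0 GammaS Gamma1 halpha _ (ltn_ord i)).
- by move=> i j ji; rewrite Rmat_entry /cholesky_entry leqNgt ji.
- by move=> i; rewrite Rmat_entry; exact: (cholesky_entry_diag_gt0 Gamma_gt0 halpha).
Qed.
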